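(* Let $M$ be a locally isotropic pseudo-Riemannian manifold, $P\in M$, and $S\in\mathcal{P}_P$. Then $S(v)$ is nilpotent for every $v\in\mathcal{N}=\{v\in T_PM:(v,v)=0\}$.
   Context: $M$ is locally isotropic if for every $P\in M$ and all nonzero $x,y\in T_PM$ with $(x,x)=(y,y)$ there is a local isometry of $M$ fixing $P$ whose differential at $P$ maps $x$ to $y$. $\mathcal{P}_P$ is the set of maps $S:T_PM\to\mathrm{Hom}(T_PM,T_PM)$ such that: (i) each $S(v)$ is self-adjoint for $(\cdot,\cdot)$; (ii) $S(v)v=0$; (iii) $S(-v)=-S(v)$; (iv) for every local isometry of $M$ fixing $P$ with differential $T$ at $P$, $S(Tv)=T\circ S(v)\circ T^{-1}$ for all $v$; (v) in any basis $e_1,\dots,e_m$ of $T_PM$, $S(\sum v_ie_i)$ is a polynomial in $v_1,\dots,v_m$ with coefficients in $\mathrm{Hom}(T_PM,T_PM)$. *)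

(* Linear-algebraic model of the data at a point P of a
   pseudo-Riemannian manifold. *)
From HB Require Import structures.
From mathcomp Require Import all_boot all_order all_algebra.
From mathcomp Require Import reals.
From mathcomp Require Import mpoly.
Set Implicit Arguments. Unset Strict Implicit. Unset Printing Implicit Defensive.
Import Order.TTheory GRing.Theory Num.Theory.
Local Open Scope ring_scope.

(* T_P M is modelled as 'rV[R]_m (coordinates in a fixed basis e_1..e_m);
   the metric (.,.) at P is given by its Gram matrix Q. Endomorphisms of
   T_P M are matrices acting on the right: x |-> x *m A. *)

Definition metric_form (R : realType) (m : nat) (Q : 'M[R]_m) (x y : 'rV[R]_m) : R :=
  (x *m Q *m y^T) 0 0.

Definition metric_matrix (R : realType) (m : nat) (Q : 'M[R]_m) : Prop :=
  Q^T = Q /\ Q \in unitmx.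

(* G = set of differentials at P of local isometries of M fixing P:
   invertible isometries of (T_P M, (.,.)), forming a group. *)
Definition isometry_group (R : realType) (m : nat) (Q : 'M[R]_m)
    (G : 'M[R]_m -> Prop) : Prop :=
  [/\ G 1%:M,
      (forall T, G T -> T \in unitmx /\
          forall x y, metric_form Q (x *m T) (y *m T) = metric_form Q x y),
      (forall T U, G T -> G U -> G (T *m U)) &
      (forall T, G T -> G (invmx T))].

Definition locally_isotropic_at (R : realType) (m : nat) (Q : 'M[R]_m)
    (G : 'M[R]_m -> Prop) : Prop :=
  forall x y : 'rV[R]_m, x != 0 -> y != 0 -> metric_form Q x x = metric_form Q y y ->
    exists T, G T /\ x *m T = y.

Definition self_adjoint (R : realType) (m : nat) (Q : 'M[R]_m) (A : 'M[R]_m) : Prop :=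
  forall x y, metric_form Q (x *m A) y = metric_form Q x (y *m A).

Definition polynomial_map (R : realType) (m : nat) (S : 'rV[R]_m -> 'M[R]_m) : Prop :=
  forall i j : 'I_m, exists p : {mpoly R[m]},
    forall v : 'rV[R]_m, S v i j = p.@[fun k => v 0 k].

Definition in_PP (R : realType) (m : nat) (Q : 'M[R]_m) (G : 'M[R]_m -> Prop)
    (S : 'rV[R]_m -> 'M[R]_m) : Prop :=
  [/\ (forall v, self_adjoint Q (S v)),
      (forall v, v *m S v = 0),
      (forall v, S (- v) = - S v),
      (forall T, G T -> forall v, S (v *m T) = invmx T *m S v *m T) &
      polynomial_map S].

Definition nilpotent (R : realType) (m : nat) (A : 'M[R]_m) : Prop :=
  exists k : nat, A ^+ k = 0.

From HB Require Import structures.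
From mathcomp Require Import all_boot all_order all_algebra.
From mathcomp Require Import reals.
From mathcomp Require Import mpoly.
Set Implicit Arguments. Unset Strict Implicit. Unset Printing Implicit Defensive.
Import Order.TTheory GRing.Theory Num.Theory.
Local Open Scope ring_scope.

(* Fix a null vector v. For t != 0 the vectors v and t v are nonzero null
   vectors, so isotropy gives an isometry T with v T = t v, and equivariance
   makes S(t v) conjugate to S(v). Hence the characteristic polynomial of
   S(t v) does not depend on t != 0; since the entries of S(t v) are
   polynomials in t, it does not depend on t at all, and t = 0 gives
   char_poly (S v) = char_poly (S 0) = X^m, as S is odd. Cayley-Hamilton
   then makes S(v) nilpotent. Only conditions (iii)-(v) on S are needed. *)

Lemma mpoly_on_line (R : comNzRingType) n (p : {mpoly R[n]}) (w : 'I_n -> R) :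
  exists q : {poly R}, forall t, q.[t] = p.@[fun k => t * w k].
Proof.
exists (\sum_(mm <- msupp p) (p@_mm * \prod_i w i ^+ mm i) *: 'X^(mdeg mm)).
move=> t; rewrite mevalE horner_sum; apply: eq_bigr => mm _.
rewrite hornerZ hornerXn -mulrA; congr (_ * _).
under [RHS]eq_bigr do rewrite exprMn.
by rewrite big_split /= mulrC mdegE -prodrXr.
Qed.

Lemma poly_eq_on_nonzero (R : numDomainType) (p q : {poly R}) :
  (forall t, t != 0 -> p.[t] = q.[t]) -> p = q.
Proof.
move=> epq; apply/eqP; rewrite -subr_eq0; set r := p - q.
apply/negPn/negP => r_neq0.
suff: (size [seq (i.+1)%:R : R | i <- iota 0 (size r)] < size r)%N.
  by rewrite size_map size_iota ltnn.
apply: max_poly_roots => //.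
  by apply/allP => _ /mapP [i _ ->]; rewrite rootE !hornerE epq ?subrr ?pnatr_eq0.
rewrite map_inj_uniq ?iota_uniq // => i j /eqP.
by rewrite eqr_nat => /eqP [].
Qed.

Lemma eq0_of_eqN (R : numFieldType) (V : lmodType R) (x : V) : x = - x -> x = 0.
Proof.
move/eqP; rewrite -subr_eq0 opprK -mulr2n -scaler_nat scaler_eq0 pnatr_eq0 /=.
exact/eqP.
Qed.

Lemma horner_char_poly (R : comNzRingType) n (A : 'M[R]_n) (l : R) :
  (char_poly A).[l] = \det (l%:M - A).
Proof.
rewrite -horner_evalE -det_map_mx /char_poly_mx map_mxB map_scalar_mx /=.
congr (\det (_ - _)); first by rewrite horner_evalE hornerX.
by apply/matrixP => i j; rewrite !mxE horner_evalE hornerC.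
Qed.

Lemma char_poly_conj (R : fieldType) n (A T : 'M[R]_n) : T \in unitmx ->
  char_poly (invmx T *m A *m T) = char_poly A.
Proof.
move=> T_unit; set T' := map_mx (@polyC R) T.
have T'_unit : T' \in unitmx by rewrite map_unitmx.
rewrite /char_poly; have -> : char_poly_mx (invmx T *m A *m T) = invmx T' *m char_poly_mx A *m T'.
  rewrite /char_poly_mx !map_mxM map_invmx mulmxBr mulmxBl mul_mx_scalar.
  by rewrite -scalemxAl mulVmx // scalemx1.
by rewrite !det_mulmx mulrC mulrA -det_mulmx mulmxV // det1 mul1r.
Qed.

Lemma char_poly0 (R : comNzRingType) n : char_poly (0 : 'M[R]_n) = 'X^n.
Proof.
rewrite char_poly_trig; last by apply/is_trig_mxP => i j _; rewrite mxE.
by rewrite (eq_bigr (fun=> 'X)) => [|i _]; rewrite ?prodr_const ?card_ord // mxE subr0.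
Qed.

Lemma char_poly_Xn_nilpotent (R : comNzRingType) n (A : 'M[R]_n) :
  char_poly A = 'X^n -> A ^+ n = 0.
Proof.
case: n A => [|n] A charA; first exact: thinmx0.
by have := Cayley_Hamilton A; rewrite charA rmorphXn /= horner_mx_X.
Qed.

Lemma char_poly_similar_off0 (R : numFieldType) n (M : 'M[{poly R}]_n)
    (A : 'M[R]_n) :
  (forall t, t != 0 -> exists2 T, T \in unitmx &
     map_mx (horner_eval t) M = invmx T *m A *m T) ->
  char_poly (map_mx (horner_eval 0) M) = char_poly A.
Proof.
move=> similar; apply: poly_eq_on_nonzero => l _.
pose D := \det ((l%:P)%:M - M).
have hornerD t : D.[t] = (char_poly (map_mx (horner_eval t) M)).[l].
  by rewrite horner_char_poly -horner_evalE -det_map_mx map_mxB map_scalar_mx /=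
    horner_evalE hornerC.
have D_const : D = ((char_poly A).[l])%:P.
  apply: poly_eq_on_nonzero => t t_neq0; rewrite hornerD hornerC.
  by have [T T_unit ->] := similar t t_neq0; rewrite char_poly_conj.
by rewrite -hornerD D_const hornerC.
Qed.

Section TangentSpace.

Variables (R : realType) (m : nat) (Q : 'M[R]_m) (G : 'M[R]_m -> Prop).

Lemma metric_formZ (a b : R) (x y : 'rV[R]_m) :
  metric_form Q (a *: x) (b *: y) = a * b * metric_form Q x y.
Proof.
rewrite /metric_form -!scalemxAl linearZ /= -scalemxAr !mxE.
by rewrite mulrA [a * b]mulrC.
Qed.

Lemma null_line_similar (S : 'rV[R]_m -> 'M[R]_m) (v : 'rV[R]_m) (t : R) :
  isometry_group Q G -> locally_isotropic_at Q G ->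
  (forall T, G T -> forall x, S (x *m T) = invmx T *m S x *m T) ->
  metric_form Q v v = 0 -> t != 0 ->
  exists2 T, T \in unitmx & S (t *: v) = invmx T *m S v *m T.
Proof.
move=> [_ G_isom _ _] isotropic S_equiv v_null t_neq0.
have [->|v_neq0] := eqVneq v 0.
  by exists 1%:M; rewrite ?unitmx1 ?invmx1 ?mul1mx ?mulmx1 ?scaler0.
have tv_neq0 : t *: v != 0 by rewrite scaler_eq0 negb_or t_neq0.
have same_norm : metric_form Q v v = metric_form Q (t *: v) (t *: v).
  by rewrite metric_formZ v_null mulr0.
have [T [GT <-]] := isotropic _ _ v_neq0 tv_neq0 same_norm.
by exists T; [case: (G_isom T GT) | rewrite S_equiv].
Qed.

Lemma polynomial_map_on_line (S : 'rV[R]_m -> 'M[R]_m) (v : 'rV[R]_m) :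
  polynomial_map S ->
  exists M : 'M[{poly R}]_m, forall t, map_mx (horner_eval t) M = S (t *: v).
Proof.
move=> S_poly.
have : forall ij : 'I_m * 'I_m, exists q : {poly R},
    forall t, q.[t] = S (t *: v) ij.1 ij.2.
  case=> i j /=; have [p S_ij] := S_poly i j.
  have [q q_line] := mpoly_on_line p (fun k => v 0 k).
  by exists q => t; rewrite S_ij q_line; apply: meval_eq => k; rewrite mxE.
case/fin_all_exists => q q_line.
by exists (\matrix_(i, j) q (i, j)) => t; apply/matrixP => i j;
  rewrite !mxE horner_evalE q_line.
Qed.

End TangentSpace.

Theorem theorem4p1 (R : realType) (m : nat) (Q : 'M[R]_m)
    (G : 'M[R]_m -> Prop) (S : 'rV[R]_m -> 'M[R]_m) :
  metric_matrix Q ->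
  isometry_group Q G ->
  locally_isotropic_at Q G ->
  in_PP Q G S ->
  forall v : 'rV[R]_m, metric_form Q v v = 0 -> nilpotent (S v).
Proof.
move=> _ G_isom isotropic [_ _ S_odd S_equiv S_poly] v v_null.
have S0 : S 0 = 0 by apply: eq0_of_eqN; rewrite -S_odd oppr0.
have [M M_line] := polynomial_map_on_line v S_poly.
have charSv : char_poly (S v) = 'X^m.
  rewrite -(char_poly0 R m) -S0 -(scale0r v) -M_line.
  symmetry; apply: char_poly_similar_off0 => t t_neq0; rewrite M_line.
  exact: (null_line_similar G_isom isotropic S_equiv v_null t_neq0).
by exists m; apply: char_poly_Xn_nilpotent.
Qed.
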